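(* The Poincar\'e series of $\mathrm{Kh}_{alg}(3,\infty;\mathbb{Q})$ is $$P_{3,\infty}(q,t)=\frac{(1+q^{10}t^5)(1+q^2+q^4t^2)}{1-q^6t^4}+q^8t^3.$$
   Context: For $n\ge1$, $A_n(\mathbb{Q})=\mathbb{Q}[x_0,\dots,x_{n-1}]\otimes\Lambda[\xi_0,\dots,\xi_{n-1}]$ is the free graded-commutative algebra on even $x_k$ (of $q$-degree $2k+2$, $t$-degree $2k$) and odd $\xi_k$ (of $q$-degree $2k+4$, $t$-degree $2k+1$), with $d_2$ the odd derivation given by $d_2(x_k)=0$, $d_2(\xi_k)=\sum_{i=0}^k x_ix_{k-i}$. $\mathrm{Kh}_{alg}(n,\infty;\mathbb{Q})=H(A_n(\mathbb{Q}),d_2)$, and its Poincar\'e series is $\sum_{a,b}\dim \mathrm{Kh}_{alg}^{a,b}\,q^at^b$ ($a$ = $q$-degree, $b$ = $t$-degree). *)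

From HB Require Import structures.
From mathcomp Require Import all_boot all_order all_algebra.
Set Implicit Arguments. Unset Strict Implicit. Unset Printing Implicit Defensive.
Import Order.TTheory GRing.Theory Num.Theory.

(* A monomial x_0^{e_0} ... x_{n-1}^{e_{n-1}} * xi_{k_1} ... xi_{k_m}
   (k_1 < ... < k_m, the indices k with s_k = true), encoded as (e, s)
   with e : seq nat, s : seq bool of length n.  These monomials form the
   standard Q-basis of the free graded-commutative algebra A_n(Q). *)
Definition mono := (seq nat * seq bool)%type.

Definition qdeg (n : nat) (m : mono) : nat :=
  sumn [seq nth 0 m.1 k * (2 * k + 2) + nth false m.2 k * (2 * k + 4) | k <- iota 0 n].
Definition tdeg (n : nat) (m : mono) : nat :=
  sumn [seq nth 0 m.1 k * (2 * k) + nth false m.2 k * (2 * k + 1) | k <- iota 0 n].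

Fixpoint exps_all (n B : nat) : seq (seq nat) :=
  if n is n'.+1 then [seq i :: s | i <- iota 0 B.+1, s <- exps_all n' B] else [:: [::]].
Fixpoint bools_all (n : nat) : seq (seq bool) :=
  if n is n'.+1 then [seq c :: s | c <- [:: false; true], s <- bools_all n'] else [:: [::]].

(* the monomial basis of the bigraded piece A_n^{a,b} (q-degree a, t-degree b);
   since every x_k has q-degree >= 2, exponents are bounded by a *)
Definition basis (n a b : nat) : seq mono :=
  [seq m <- [seq (e, s) | e <- exps_all n a, s <- bools_all n]
     | (qdeg n m == a) && (tdeg n m == b)].

(* d_2 on a basis monomial, as a list of (coefficient, monomial) terms:
   d_2 is an odd derivation with d_2 x_k = 0, d_2 xi_k = sum_{i=0}^k x_i x_{k-i}, so
   d_2(x^e xi_{k_1}...xi_{k_m}) = sum_j (-1)^(j-1) x^e (sum_i x_i x_{k_j - i})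
                                     xi_{k_1}..^{xi_{k_j}}..xi_{k_m}. *)
Definition d2 (n : nat) (m : mono) : seq (rat * mono) :=
  let S := [seq k <- iota 0 n | nth false m.2 k] in
  flatten [seq
     [seq (((-1) ^+ j)%R, (incr_nth (incr_nth m.1 i) (nth 0 S j - i),
                          set_nth false m.2 (nth 0 S j) false))
       | i <- iota 0 (nth 0 S j).+1]
   | j <- iota 0 (size S)].

Definition coef (l : seq (rat * mono)) (m' : mono) : rat :=
  (\sum_(p <- l | p.2 == m') p.1)%R.

Definition dflt_mono : mono := ([::], [::]).

Definition tgt (n a b : nat) : seq mono :=
  if b is b'.+1 then basis n a b' else [::].

(* matrix of d_2 : A_n^{a,b} -> A_n^{a,b-1}, row-vector convention
   (row i = coordinates of d_2 of the i-th basis monomial) *)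
Definition dmat (n a b : nat) : 'M[rat]_(size (basis n a b), size (tgt n a b)) :=
  \matrix_(i, j) coef (d2 n (nth dflt_mono (basis n a b) i)) (nth dflt_mono (tgt n a b) j).

(* dim_Q Kh_alg^{a,b}(n, oo; Q) = dim ker(d_2 on A^{a,b}) - dim im(d_2 : A^{a,b+1} -> A^{a,b}) *)
Definition Khdim (n a b : nat) : nat :=
  (\rank (kermx (dmat n a b)) - \rank (dmat n a b.+1))%N.

Definition bser := nat -> nat -> int.
Definition smono (c : int) (i j : nat) : bser :=
  fun a b => if (a == i) && (b == j) then c else 0%R.
Definition sadd (F G : bser) : bser := fun a b => (F a b + G a b)%R.
Definition smul (F G : bser) : bser :=
  fun a b => (\sum_(i < a.+1) \sum_(j < b.+1) F i j * G (a - i)%N (b - j)%N)%R.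
(* 1/(1 - q^i t^j) = sum_{m>=0} q^{i m} t^{j m}, for (i,j) <> (0,0) *)
Definition sgeom (i j : nat) : bser :=
  fun a b => if [exists m : 'I_(a + b).+1, (a == i * m)%N && (b == j * m)%N] then 1%R else 0%R.

Definition P3 : bser :=
  sadd (smul (smul (sadd (smono 1 0 0) (smono 1 10 5))
                   (sadd (sadd (smono 1 0 0) (smono 1 2 0)) (smono 1 4 2)))
             (sgeom 6 4))
       (smono 1 8 3).

From mathcomp Require Import all_boot all_order all_algebra.
From mathcomp Require Import zify ring lra.
Set Implicit Arguments. Unset Strict Implicit. Unset Printing Implicit Defensive.
Import GRing.Theory.

(* The proof is algebraic discrete Morse theory on the monomial basis of A_3.
   A matching [pt] pairs each "up" monomial m with a monomial [pt m] of the
   same q-degree and of t-degree one less, occurring in d_2 m with nonzero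
   coefficient; the pairing is triangular for a level function [lv].

   - General linear algebra over a field (sections TriangularRank and
     MatchedSequences): a triangular matched submatrix bounds the rank of a
     differential from below, and, when the composite of two differentials
     vanishes, bounds the rank of the next differential from above.
   - Applied to d_2 on A_3 this gives rank = number of up monomials in even
     t-degree; in odd t-degree the same follows by counting, since critical
     (unmatched) monomials never occur in t-degrees b+1 and b with b+1 odd.
     Hence dim Kh^{a,b} is the number of critical monomials ([Khdim_crit]).
   - The critical monomials form six families x_0^e x_1^i xi_1^s x_2^j, each
     meeting the bidegrees along a ray (q0, t0) + N (6, 4); expanding the
     series P3 into the same ray indicators proves [mainTheorem4]. *)

Section TriangularRank.
Variable F : fieldType.
Local Open Scope ring_scope.

Lemma triangular_row_free k (T : 'M[F]_k) (lv : 'I_k -> nat) :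
  (forall i, T i i != 0) -> (forall i j, i != j -> T j i != 0 -> (lv i < lv j)%N) ->
  row_free T.
Proof.
move=> diag tri; rewrite -kermx_eq0; apply/eqP/row_matrixP => r; rewrite row0.
set v := row r (kermx T).
have vT0 : v *m T = 0 by rewrite /v -row_mul mulmx_ker row0.
apply/rowP => i0; rewrite [RHS]mxE; apply/eqP/negPn/negP => nz.
(* a coordinate of v of maximal level cannot be cancelled in v *m T *)
case: (@arg_maxnP _ i0 (fun i => v 0 i != 0) lv nz) => i nzi maxi.
have := congr1 (fun w : 'rV_k => w 0 i) vT0; rewrite !mxE (bigD1 i) //= big1 ?addr0.
  by move/eqP; rewrite mulf_eq0 (negPf nzi) (negPf (diag i)).
move=> j nji; have [->|/eqP vj] := v 0 j =P 0; first by rewrite mul0r.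
have [->|/eqP tji] := T j i =P 0; first by rewrite mulr0.
have nij : i != j by rewrite eq_sym.
by have := tri i j nij tji; have := maxi j vj; lia.
Qed.

Lemma triangular_rank m n k (M : 'M[F]_(m, n)) (p : 'I_k -> 'I_m) (q : 'I_k -> 'I_n)
    (lv : 'I_k -> nat) :
  (forall i, M (p i) (q i) != 0) ->
  (forall i j, i != j -> M (p j) (q i) != 0 -> (lv i < lv j)%N) ->
  (k <= \rank M)%N.
Proof.
move=> diag tri.
have /eqP <- : row_free (mxsub p q M).
  by apply: (triangular_row_free (lv := lv)) => [i|i j]; rewrite mxE; [exact: diag|exact: tri].
rewrite mxsubrc (leq_trans (mxrankS (rowsub_sub _ _))) //.
have -> : colsub q M = M *m colsub q 1%:M by rewrite mulmx_colsub mulmx1.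
exact: mxrankM_maxl.
Qed.

(* Upper bound for a differential D preceded by E (E *m D = 0): if E has a
   triangular k x k submatrix on rows p and columns q, then every row of D
   indexed by q lies in the span of the remaining rows of D, so rank D is at
   most the number of rows of D outside q that are not known to vanish. *)
Lemma rank_le_matched m1 m2 n k (E : 'M[F]_(m2, m1)) (D : 'M[F]_(m1, n))
    (p : 'I_k -> 'I_m2) (q : 'I_k -> 'I_m1) (lv : 'I_k -> nat) (S : {set 'I_m1}) :
  E *m D = 0 -> injective q ->
  (forall i, E (p i) (q i) != 0) ->
  (forall i j, i != j -> E (p j) (q i) != 0 -> (lv i < lv j)%N) ->
  (forall r, r \notin S -> r \notin q @: setT -> row r D = 0) ->
  (\rank D <= #|S|)%N.
Proof.
move=> ED0 q_inj diag tri zero_rows.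
pose P := rowsub (fun i : 'I_#|S| => enum_val i) D.
have rows_off r : r \notin q @: setT -> (row r D <= P)%MS.
  move=> nq; have [rS|nS] := boolP (r \in S); last by rewrite zero_rows ?sub0mx.
  by rewrite -(enum_rankK_in rS rS) -row_rowsub row_sub.
pose T := mxsub p q E; pose Q := rowsub q D.
have T_unit : T \in unitmx.
  rewrite -row_free_unit; apply: (triangular_row_free (lv := lv)) => [i|i j];
    rewrite mxE; [exact: diag|exact: tri].
(* row (p i) of E *m D = 0 expresses row i of T *m Q through rows off q *)
have TQ : (T *m Q <= P)%MS.
  apply/row_subP => i; rewrite row_mul mulmx_sum_row.
  have := congr1 (row (p i)) ED0; rewrite row_mul row0 mulmx_sum_row.
  rewrite (bigID (mem (q @: setT))) /= big_imset /=; last by move=> ? ? _ _ /q_inj.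
  have -> : \sum_(j in setT) row (p i) E 0 (q j) *: row (q j) D =
            \sum_j row i T 0 j *: row j Q.
    by rewrite (eq_bigl xpredT) => [|j]; [apply: eq_bigr => j _; rewrite !mxE row_rowsub|rewrite inE].
  move/eqP; rewrite addr_eq0 => /eqP ->.
  rewrite -scaleN1r; apply/scalemx_sub/summx_sub => r nr.
  exact/scalemx_sub/rows_off.
have QP : (Q <= P)%MS by rewrite -(mulKmx T_unit Q) (submx_trans (submxMl _ _) TQ).
have DP : (D <= P)%MS.
  apply/row_subP => r; have [/imsetP[j _ ->]|] := boolP (r \in q @: setT); last exact: rows_off.
  by rewrite -row_rowsub (submx_trans (row_sub _ _) QP).
by rewrite (leq_trans (mxrankS DP)) // rank_leq_row.
Qed.

End TriangularRank.

Lemma index_lt_size (X : eqType) (s : seq X) x : x \in s -> (index x s < size s)%N.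
Proof. by rewrite index_mem. Qed.

Definition seq_ord (X : eqType) (s : seq X) (x : X) (xs : x \in s) : 'I_(size s) :=
  Ordinal (index_lt_size xs).

Lemma nth_seq_ord (X : eqType) (x0 : X) s x (xs : x \in s) : nth x0 s (seq_ord xs) = x.
Proof. exact: nth_index. Qed.

Lemma card_nth_pred (X : eqType) (x0 : X) (P : pred X) (s : seq X) :
  #|[set r : 'I_(size s) | P (nth x0 s r)]| = count P s.
Proof.
rewrite -[in RHS](mkseq_nth x0 s) /mkseq count_map -val_enum_ord count_map.
rewrite cardsE cardE /enum_mem size_filter count_filter.
by apply: eq_count => r; rewrite !inE andbT.
Qed.

Section MatchedSequences.
Variables (F : fieldType) (X : eqType) (x0 : X) (c : X -> X -> F).
Local Open Scope ring_scope.

Definition seq_mx (s s' : seq X) : 'M[F]_(size s, size s') :=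
  \matrix_(i, j) c (nth x0 s i) (nth x0 s' j).

Variables (up : pred X) (pt : X -> X) (lv : X -> nat) (s2 s1 : seq X).
Hypotheses (s2_uniq : uniq s2) (s1_uniq : uniq s1).
Hypothesis pt_in : forall x, x \in s2 -> up x -> pt x \in s1.
Hypothesis pt_coef : forall x, x \in s2 -> up x -> c x (pt x) != 0.
Hypothesis pt_tri : forall x y, x \in s2 -> y \in s2 -> up x -> up y -> x != y ->
  c y (pt x) != 0 -> (lv x < lv y)%N.

Let upc (i : 'I_(count up s2)) : X := nth x0 (filter up s2) i.

Let upc_filter i : upc i \in filter up s2.
Proof. by rewrite mem_nth // size_filter. Qed.

Let upc_in i : upc i \in s2. Proof. by have := upc_filter i; rewrite mem_filter => /andP[]. Qed.
Let upc_up i : up (upc i). Proof. by have := upc_filter i; rewrite mem_filter => /andP[]. Qed.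

Let upc_inj : injective upc.
Proof.
move=> i j /eqP; rewrite nth_uniq ?size_filter ?ltn_ord ?filter_uniq //.
by move/eqP/val_inj.
Qed.

Let prow i : 'I_(size s2) := seq_ord (upc_in i).
Let qcol i : 'I_(size s1) := seq_ord (pt_in (upc_in i) (upc_up i)).

Let seq_mx_matched i j : seq_mx s2 s1 (prow i) (qcol j) = c (upc i) (pt (upc j)).
Proof. by rewrite mxE !nth_seq_ord. Qed.

Let matched_diag i : seq_mx s2 s1 (prow i) (qcol i) != 0.
Proof. by rewrite seq_mx_matched pt_coef. Qed.

Let matched_tri i j : i != j -> seq_mx s2 s1 (prow j) (qcol i) != 0 ->
  (lv (upc i) < lv (upc j))%N.
Proof.
by rewrite seq_mx_matched => nij; apply: pt_tri; rewrite ?upc_in ?upc_up ?(inj_eq upc_inj).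
Qed.

Lemma matched_rank_lb : (count up s2 <= \rank (seq_mx s2 s1))%N.
Proof. exact: (triangular_rank (lv := fun i => lv (upc i)) matched_diag matched_tri). Qed.

Lemma matched_rank_ub (s0 : seq X) :
  seq_mx s2 s1 *m seq_mx s1 s0 = 0 ->
  {in [pred x in s2 | up x] &, injective pt} ->
  (forall y, y \in s1 -> ~~ up y -> (forall x, x \in s2 -> up x -> pt x != y) ->
     forall z, c y z = 0) ->
  (\rank (seq_mx s1 s0) <= count up s1)%N.
Proof.
move=> dd0 pt_inj unmatched0.
rewrite -(card_nth_pred x0).
apply: (rank_le_matched (lv := fun i => lv (upc i)) dd0 _ matched_diag matched_tri).
  move=> i j /(congr1 (fun r : 'I_(size s1) => nth x0 s1 r)).
  rewrite !nth_seq_ord => eq_pt; apply: upc_inj.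
  by apply: pt_inj eq_pt; rewrite inE upc_in upc_up.
move=> r; rewrite inE => nup nmatched; apply/rowP => z; rewrite !mxE.
apply: unmatched0 => //; first by rewrite mem_nth.
move=> x xs ux; apply: contra nmatched => /eqP ptx.
have xf : x \in filter up s2 by rewrite mem_filter ux xs.
have i_lt : (index x (filter up s2) < count up s2)%N by rewrite -size_filter index_mem.
apply/imsetP; exists (Ordinal i_lt) => //; apply: val_inj => /=.
by rewrite /upc nth_index // ptx index_uniq.
Qed.

End MatchedSequences.

Definition mk (e0 e1 e2 : nat) (s0 s1 s2 : bool) : mono :=
  ([:: e0; e1; e2], [:: s0; s1; s2]).
Arguments mk e0 e1 e2 s0 s1 s2 /.

Definition mono3 (m : mono) : bool := (size m.1 == 3) && (size m.2 == 3).

Lemma mono3P m : mono3 m -> exists e0 e1 e2 s0 s1 s2, m = mk e0 e1 e2 s0 s1 s2.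
Proof.
case: m => [[|e0 [|e1 [|e2 [|? ?]]]] [|s0 [|s1 [|s2 [|? ?]]]]] //= _.
by exists e0, e1, e2, s0, s1, s2.
Qed.

Lemma mono3_mk e0 e1 e2 s0 s1 s2 : mono3 (mk e0 e1 e2 s0 s1 s2).
Proof. by []. Qed.

Lemma mk_eq a0 a1 a2 b0 b1 b2 c0 c1 c2 d0 d1 d2 :
  (mk a0 a1 a2 b0 b1 b2 == mk c0 c1 c2 d0 d1 d2) =
  [&& a0 == c0, a1 == c1, a2 == c2, b0 == d0, b1 == d1 & b2 == d2].
Proof. by rewrite /mk xpair_eqE !eqseq_cons !andbT !andbA. Qed.

Lemma qdegE e0 e1 e2 s0 s1 s2 :
  qdeg 3 (mk e0 e1 e2 s0 s1 s2) = 2 * e0 + 4 * e1 + 6 * e2 + 4 * s0 + 6 * s1 + 8 * s2.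
Proof. by rewrite /qdeg /=; case: s0; case: s1; case: s2 => /=; lia. Qed.

Lemma tdegE e0 e1 e2 s0 s1 s2 :
  tdeg 3 (mk e0 e1 e2 s0 s1 s2) = 2 * e1 + 4 * e2 + s0 + 3 * s1 + 5 * s2.
Proof. by rewrite /tdeg /=; case: s0; case: s1; case: s2 => /=; lia. Qed.

Lemma mem_exps_all n B s :
  (s \in exps_all n B) = (size s == n) && all (fun x => x <= B) s.
Proof.
elim: n s => [|n IH] s; first by case: s.
apply/allpairsP/idP.
  case=> -[x t] [hx ht ->]; rewrite mem_iota /= in hx; rewrite IH in ht.
  by rewrite /= eqSS; move: ht => /andP[-> ->]; rewrite andbT; lia.
case: s => [|x s] // H; rewrite /= eqSS in H; case/and3P: H => hs hx ha.
by exists (x, s); rewrite mem_iota IH hs ha; split => //; lia.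
Qed.

Lemma mem_bools_all n s : (s \in bools_all n) = (size s == n).
Proof.
elim: n s => [|n IH] s; first by case: s.
apply/allpairsP/idP; first by case=> -[x t] [_ ht ->]; rewrite /= eqSS -IH.
case: s => [|x s] //=; rewrite eqSS -IH => hs.
by exists (x, s); split=> //; case: x.
Qed.

Lemma uniq_exps_all n B : uniq (exps_all n B).
Proof.
elim: n => [|n IH] //; apply: allpairs_uniq => //; first exact: iota_uniq.
by case=> [x s] [y t] _ _ /= [-> ->].
Qed.

Lemma uniq_bools_all n : uniq (bools_all n).
Proof.
elim: n => [|n IH] //; apply: allpairs_uniq => //.
by case=> [x s] [y t] _ _ /= [-> ->].
Qed.

Lemma uniq_basis n a b : uniq (basis n a b).
Proof.
apply/filter_uniq/allpairs_uniq; [exact: uniq_exps_all|exact: uniq_bools_all|].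
by case=> [x s] [y t] _ _ /= [-> ->].
Qed.

Lemma mem_basis a b m :
  (m \in basis 3 a b) = [&& mono3 m, qdeg 3 m == a & tdeg 3 m == b].
Proof.
rewrite /basis mem_filter; apply/andP/idP.
  case=> /andP[qa tb] /allpairsP [[e s] [he hs em]]; subst m.
  rewrite mem_exps_all in he; rewrite mem_bools_all /= in hs; rewrite /= in he qa tb.
  by case/andP: he => he _; rewrite /mono3 /= he hs qa tb.
case/and3P => hsh qa tb; split; first by rewrite qa tb.
apply/allpairsP; exists m; split; last by case: m {qa tb} hsh.
  case: (mono3P hsh) (eqP qa) => [e0 [e1 [e2 [s0 [s1 [s2 ->]]]]]].
  by rewrite qdegE mem_exps_all => <- /=; lia.
by case/andP: hsh; rewrite mem_bools_all.
Qed.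

Lemma basis_mono3 a b m : m \in basis 3 a b -> mono3 m.
Proof. by rewrite mem_basis => /and3P[]. Qed.

Definition ex (m : mono) k := nth 0 m.1 k.
Definition xi (m : mono) k := nth false m.2 k.
Arguments ex m k /.
Arguments xi m k /.

(* Since d_2 xi_0 = x_0^2,
   d_2 xi_1 = 2 x_0 x_1 and d_2 xi_2 = x_1^2 + 2 x_0 x_2, a monomial m is
   matched downwards ([is_up]) with [pt m], obtained by replacing
   - xi_0 by x_0^2, if xi_0 divides m;
   - otherwise xi_2 by x_1^2, if xi_2 divides m and x_0^2 does not;
   - otherwise xi_1 by x_0 x_1, if xi_1 divides m and x_0, x_1, xi_2 do not.
   [is_down] characterises the images of [pt], [ipt] inverts [pt], and
   [is_crit] marks the unmatched (critical) monomials. *)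
Definition is_up (m : mono) : bool :=
  [|| xi m 0, (ex m 0 <= 1) && xi m 2 |
      [&& ~~ xi m 2, xi m 1, ex m 0 == 0 & ex m 1 == 0]].
Definition is_down (m : mono) : bool :=
  ~~ xi m 0 && ((2 <= ex m 0) || (~~ xi m 2 &&
    ((2 <= ex m 1) || [&& ~~ xi m 1, ex m 0 == 1 & ex m 1 == 1]))).
Definition is_crit (m : mono) : bool := ~~ is_up m && ~~ is_down m.

Definition pt (m : mono) : mono :=
  if xi m 0 then mk (ex m 0).+2 (ex m 1) (ex m 2) false (xi m 1) (xi m 2)
  else if xi m 2 then mk (ex m 0) (ex m 1).+2 (ex m 2) false (xi m 1) false
  else mk (ex m 0).+1 (ex m 1).+1 (ex m 2) false false false.
Definition ipt (m : mono) : mono :=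
  if 2 <= ex m 0 then mk (ex m 0 - 2) (ex m 1) (ex m 2) true (xi m 1) (xi m 2)
  else if 2 <= ex m 1 then mk (ex m 0) (ex m 1 - 2) (ex m 2) false (xi m 1) true
  else mk 0 0 (ex m 2) false true false.

Definition lv (m : mono) : nat :=
  if xi m 0 then 0 else if xi m 2 then (if ex m 0 == 1 then 1 else 2) else 0.

Ltac mono3_cases H := case: (mono3P H) => [e0 [e1 [e2 [s0 [s1 [s2 ->]]]]]].
Ltac split_hyps := repeat match goal with
  | H : is_true (_ && _) |- _ => case/andP: H => ? ?
  | H : is_true (_ || _) |- _ => case/orP: H => ?
  | H : is_true (_ == _) |- _ => move/eqP: H => ?
  end; subst.
Ltac bool_cases := repeat match goal with b : bool |- _ => case: b end.

Lemma up_not_down m : is_up m -> ~~ is_down m.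
Proof.
rewrite /is_up /is_down; case: (xi m 0) => //=.
by case: (xi m 2) => /=; case: (xi m 1) => /=; lia.
Qed.

Section MatchingOnMonomial.
Variable m : mono.
Hypothesis m3 : mono3 m.

Lemma pt_mono3 : mono3 (pt m).
Proof. by rewrite /pt; case: ifP; [|case: ifP]. Qed.

Lemma ipt_mono3 : mono3 (ipt m).
Proof. by rewrite /ipt; case: ifP; [|case: ifP]. Qed.

Lemma pt_down : is_up m -> is_down (pt m).
Proof. by mono3_cases m3; rewrite /is_up /is_down /pt /=; bool_cases => /=; lia. Qed.

Lemma ipt_up : is_down m -> is_up (ipt m).
Proof.
by mono3_cases m3; rewrite /is_up /is_down /ipt /=; bool_cases => /=;
  repeat case: ifP => //=; lia.
Qed.

Lemma ipt_pt : is_up m -> ipt (pt m) = m.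
Proof.
mono3_cases m3; rewrite /is_up /pt /ipt /=; bool_cases => //=;
  repeat case: ifP => //=; (try lia); intros; split_hyps; rewrite ?subSS ?subn0 //.
Qed.

Lemma pt_ipt : is_down m -> pt (ipt m) = m.
Proof.
mono3_cases m3; rewrite /is_down /pt /ipt /=; bool_cases => //=;
  repeat case: ifP => //=; (try lia); intros; split_hyps;
  rewrite ?subSS ?subn0 //; repeat f_equal; lia.
Qed.

Lemma pt_qdeg : is_up m -> qdeg 3 (pt m) = qdeg 3 m.
Proof. by mono3_cases m3; rewrite /is_up /pt /=; bool_cases => //=; rewrite !qdegE; lia. Qed.

Lemma pt_tdeg : is_up m -> (tdeg 3 (pt m)).+1 = tdeg 3 m.
Proof. by mono3_cases m3; rewrite /is_up /pt /=; bool_cases => //=; rewrite !tdegE; lia. Qed.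

End MatchingOnMonomial.

Section D2Ranks.
Local Open Scope ring_scope.

Definition cf (m m' : mono) : rat := coef (d2 3 m) m'.

Lemma coef_expand l m' : coef l m' = \sum_(p <- l) (p.2 == m')%:R * p.1.
Proof. by rewrite /coef big_mkcond; apply: eq_bigr => p _; case: eqP; rewrite ?mul1r ?mul0r. Qed.

Lemma coef_supp l m' : coef l m' != 0 -> m' \in [seq p.2 | p <- l].
Proof.
rewrite /coef; elim: l => [|p l IH]; first by rewrite big_nil eqxx.
rewrite big_cons /= inE; case: (p.2 =P m') => [<- _|_ /IH ->]; by rewrite ?eqxx ?orbT.
Qed.

Lemma d2_bidegree m y : mono3 m -> y \in [seq p.2 | p <- d2 3 m] ->
  [&& mono3 y, qdeg 3 y == qdeg 3 m & (tdeg 3 y).+1 == tdeg 3 m].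
Proof.
move=> m3; mono3_cases m3; bool_cases; rewrite /= ?inE //;
 repeat (case/orP; [move/eqP => -> |]); try (move/eqP => ->);
 rewrite /mono3 /qdeg /tdeg /=; lia.
Qed.

Lemma d2_basis a b m y : m \in basis 3 a b.+1 -> y \in [seq p.2 | p <- d2 3 m] ->
  y \in basis 3 a b.
Proof.
rewrite !mem_basis => /and3P[m3 /eqP qa /eqP tb] ym.
case/and3P: (d2_bidegree m3 ym) => -> /eqP -> /eqP; rewrite qa tb eqxx /=.
by move=> [->].
Qed.

Lemma d2_d2 m z : mono3 m -> \sum_(p <- d2 3 m) p.1 * cf p.2 z = 0.
Proof.
move=> m3; mono3_cases m3; bool_cases;
  by rewrite /cf /= ?big_cons ?big_nil //= !coef_expand /= ?big_cons ?big_nil /=; ring.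
Qed.

Ltac if_cases := repeat match goal with |- context [if ?c then _ else _] =>
  let E := fresh "E" in case E: c;
  [try (move/eqP: E => E; injection E; intros; lia) | try by rewrite eqxx in E] end.

Lemma cf_pt m : mono3 m -> is_up m -> cf m (pt m) != 0.
Proof.
move=> m3; mono3_cases m3; bool_cases; rewrite /is_up /cf /coef /pt /= ?big_cons ?big_nil /= => up_m;
 if_cases; rewrite ?expr0 ?expr1 ?sqrrN ?expr1n; apply/negP => /eqP H; try lra;
 exfalso; lia.
Qed.

Lemma matching_triangular x y : mono3 x -> mono3 y -> is_up x -> is_up y -> x != y ->
  pt x \in [seq p.2 | p <- d2 3 y] -> (lv x < lv y)%N.
Proof.
move=> x3 y3; case: (mono3P x3) => [a0 [a1 [a2 [u0 [u1 [u2 ->]]]]]].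
case: (mono3P y3) => [b0 [b1 [b2 [v0 [v1 [v2 ->]]]]]].
rewrite mk_eq.
case: u0; case: u1; case: u2; case: v0; case: v1; case: v2;
rewrite /is_up /pt /lv /= ?inE ?xpair_eqE ?eqseq_cons /=; repeat case: ifP; lia.
Qed.

Lemma d2_crit_even m : mono3 m -> is_crit m -> ~~ odd (tdeg 3 m) -> d2 3 m = [::].
Proof.
by move=> m3; mono3_cases m3; rewrite tdegE /is_crit /is_up /is_down; bool_cases => //=; lia.
Qed.

Lemma crit_gap x y : mono3 x -> mono3 y -> is_crit x -> is_crit y ->
  qdeg 3 x = qdeg 3 y -> (tdeg 3 y).+1 = tdeg 3 x -> odd (tdeg 3 x) -> False.
Proof.
move=> x3 y3; case: (mono3P x3) => [a0 [a1 [a2 [u0 [u1 [u2 ->]]]]]].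
case: (mono3P y3) => [b0 [b1 [b2 [v0 [v1 [v2 ->]]]]]].
rewrite !qdegE !tdegE /is_crit /is_up /is_down.
by case: u0; case: u1; case: u2; case: v0; case: v1; case: v2 => /=; lia.
Qed.

Lemma dmatE a b : dmat 3 a b = seq_mx dflt_mono cf (basis 3 a b) (tgt 3 a b).
Proof. by []. Qed.

Lemma sum_coef (s : seq mono) l (f : mono -> rat) : uniq s ->
  {subset [seq p.2 | p <- l] <= s} ->
  \sum_(y <- s) coef l y * f y = \sum_(p <- l) p.1 * f p.2.
Proof.
move=> s_uniq supp_s.
transitivity (\sum_(y <- s) \sum_(p <- l) (p.2 == y)%:R * p.1 * f y).
  by apply: eq_bigr => y _; rewrite coef_expand big_distrl.
rewrite exchange_big; apply: eq_big_seq => p pl.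
have ps : p.2 \in s by apply/supp_s/map_f.
rewrite (bigD1_seq p.2) //= eqxx mul1r big1 ?addr0 // => y ny.
by rewrite eq_sym (negPf ny) !mul0r.
Qed.

Lemma sum_nth (R : nmodType) (T : Type) (x0 : T) (s : seq T) (G : T -> R) :
  \sum_(j < size s) G (nth x0 s j) = \sum_(y <- s) G y.
Proof. by rewrite (big_nth x0) big_mkord. Qed.

Lemma dmat_dd a b : dmat 3 a b.+1 *m dmat 3 a b = 0.
Proof.
apply/matrixP => i k; rewrite !mxE [tgt 3 a b.+1]/tgt; under eq_bigr do rewrite !mxE.
set x := nth _ _ i; have xb : x \in basis 3 a b.+1 by rewrite mem_nth.
pose G y := cf x y * cf y (nth dflt_mono (tgt 3 a b) k).
rewrite -[LHS]/(\sum_(j < size (basis 3 a b)) G (nth dflt_mono (basis 3 a b) j)).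
rewrite sum_nth /G /cf sum_coef ?uniq_basis //.
  exact/d2_d2/(basis_mono3 xb).
by move=> y; exact: d2_basis xb.
Qed.

Definition num_up a b := count is_up (basis 3 a b).
Definition num_down a b := count is_down (basis 3 a b).
Definition num_crit a b := count is_crit (basis 3 a b).

Lemma up_pt_basis a b x : x \in basis 3 a b.+1 -> is_up x -> pt x \in basis 3 a b.
Proof.
rewrite !mem_basis => /and3P[x3 /eqP qx /eqP tx] ux.
rewrite pt_mono3 // pt_qdeg // qx eqxx /=.
by have := pt_tdeg x3 ux; rewrite tx => -[->].
Qed.

Lemma down_ipt_basis a b y : y \in basis 3 a b -> is_down y -> ipt y \in basis 3 a b.+1.
Proof.
move=> yb dy; have y3 := basis_mono3 yb; have uy := ipt_up y3 dy.
have qe : qdeg 3 (ipt y) = qdeg 3 y by rewrite -{2}(pt_ipt y3 dy) pt_qdeg ?ipt_mono3.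
have te : tdeg 3 (ipt y) = (tdeg 3 y).+1 by rewrite -{2}(pt_ipt y3 dy) pt_tdeg ?ipt_mono3.
by move: yb; rewrite !mem_basis ipt_mono3 qe te eqSS => /and3P[_ -> ->].
Qed.

Lemma no_up_tdeg0 a x : x \in basis 3 a 0 -> ~~ is_up x.
Proof.
rewrite mem_basis => /and3P[x3 _ /eqP tx]; apply/negP => ux.
by have := pt_tdeg x3 ux; rewrite tx.
Qed.

Lemma cf_pt_triangular a b x y : x \in basis 3 a b -> y \in basis 3 a b ->
  is_up x -> is_up y -> x != y -> cf y (pt x) != 0 -> (lv x < lv y)%N.
Proof.
move=> xb yb ux uy nxy /coef_supp.
exact: matching_triangular (basis_mono3 xb) (basis_mono3 yb) ux uy nxy.
Qed.

Lemma rank_dmat_lb a b : (num_up a b <= \rank (dmat 3 a b))%N.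
Proof.
rewrite dmatE; apply: (@matched_rank_lb _ _ _ _ is_up pt lv).
- exact: uniq_basis.
- case: b => [|b] x xb ux; last exact: up_pt_basis.
  by move: ux; rewrite (negPf (no_up_tdeg0 xb)).
- by move=> x xb ux; apply/cf_pt/ux/(basis_mono3 xb).
- exact: cf_pt_triangular.
Qed.

Lemma rank_dmat_ub_even a b : ~~ odd b -> (\rank (dmat 3 a b) <= num_up a b)%N.
Proof.
move=> eb; rewrite dmatE.
apply: (@matched_rank_ub _ _ _ _ is_up pt lv (basis 3 a b.+1)).
- exact: uniq_basis.
- exact: uniq_basis.
- exact: up_pt_basis.
- by move=> x xb ux; apply/cf_pt/ux/(basis_mono3 xb).
- exact: cf_pt_triangular.
- exact: dmat_dd.
- move=> x x' /andP[xb ux] /andP[xb' ux'] e.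
  by rewrite -(ipt_pt (basis_mono3 xb) ux) e ipt_pt // (basis_mono3 xb').
move=> y yb uy unmatched z; have y3 := basis_mono3 yb.
have dy : ~~ is_down y.
  apply/negP => dy; move: (unmatched _ (down_ipt_basis yb dy) (ipt_up y3 dy)).
  by rewrite pt_ipt // eqxx.
have cy : is_crit y by rewrite /is_crit uy dy.
have ty : ~~ odd (tdeg 3 y) by move: yb; rewrite mem_basis => /and3P[_ _ /eqP ->].
by rewrite /cf (d2_crit_even y3 cy ty) /coef big_nil.
Qed.

Lemma rank_dmat_dd a b : (\rank (dmat 3 a b.+1) + \rank (dmat 3 a b) <= size (basis 3 a b))%N.
Proof.
have := dmat_dd a b; move/eqP; rewrite -sub_kermx => /mxrankS; rewrite mxrank_ker.
by have := rank_leq_row (dmat 3 a b); rewrite /tgt /=; lia.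
Qed.

Lemma size_basis_split a b : size (basis 3 a b) = (num_up a b + num_down a b + num_crit a b)%N.
Proof.
rewrite -(count_predC is_up) /num_up -addnA; congr (_ + _)%N.
rewrite /num_down /num_crit -count_predUI.
rewrite (@eq_count _ (predI _ _) pred0) ?count_pred0 ?addn0; last first.
  by move=> x /=; rewrite /is_crit; case: (is_down x); rewrite ?andbF.
apply: eq_count => x /=; rewrite /is_crit.
by case ux: (is_up x); case dx: (is_down x) => //=; move: (up_not_down ux); rewrite dx.
Qed.

(* pt is a bijection from the up monomials of t-degree b+1 onto the down monomials of t-degree b *)
Lemma num_down_up a b : num_down a b = num_up a b.+1.
Proof.
rewrite /num_down /num_up -!size_filter -(size_map ipt); apply/perm_size/uniq_perm.
- rewrite map_inj_in_uniq; first exact/filter_uniq/uniq_basis.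
  move=> x y; rewrite mem_filter => /andP[dx xb]; rewrite mem_filter => /andP[dy yb] e.
  by rewrite -(pt_ipt (basis_mono3 xb) dx) -(pt_ipt (basis_mono3 yb) dy) e.
- exact/filter_uniq/uniq_basis.
move=> x; apply/mapP/idP.
  case=> y; rewrite mem_filter => /andP[dy yb] ->.
  by rewrite mem_filter ipt_up ?(basis_mono3 yb) ?down_ipt_basis.
rewrite mem_filter => /andP[ux xb]; exists (pt x).
  by rewrite mem_filter pt_down ?(basis_mono3 xb) ?up_pt_basis.
by rewrite ipt_pt ?(basis_mono3 xb).
Qed.

Lemma crit_adjacent a b : (0 < num_crit a b.+1)%N -> (0 < num_crit a b)%N -> odd b.+1 -> False.
Proof.
rewrite /num_crit -!has_count => /hasP[x xb cx] /hasP[y yb cy] ob.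
move: xb yb; rewrite !mem_basis => /and3P[x3 /eqP qx /eqP tx] /and3P[y3 /eqP qy /eqP ty].
by apply: (crit_gap x3 y3 cx cy); rewrite ?qx ?qy ?tx ?ty.
Qed.

Lemma rank_dmat a b : \rank (dmat 3 a b) = num_up a b.
Proof.
apply/eqP; rewrite eqn_leq rank_dmat_lb andbT.
have [ob|eb] := boolP (odd b); last exact: rank_dmat_ub_even.
case: b ob => [//|b] ob.
have := rank_dmat_dd a b; have := rank_dmat_dd a b.+1.
have := rank_dmat_lb a b; have := rank_dmat_lb a b.+2.
have := size_basis_split a b; have := size_basis_split a b.+1.
have := num_down_up a b; have := num_down_up a b.+1.
have [c1|c1] := posnP (num_crit a b); first lia.
have [c2|c2] := posnP (num_crit a b.+1); first lia.
by case: (crit_adjacent c2 c1 ob).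
Qed.

Lemma Khdim_crit a b : Khdim 3 a b = num_crit a b.
Proof.
rewrite /Khdim mxrank_ker !rank_dmat.
by have := size_basis_split a b; have := num_down_up a b; lia.
Qed.

End D2Ranks.

Definition on_ray (q0 t0 a b : nat) : bool :=
  [exists j : 'I_a.+1, (a == q0 + 6 * j) && (b == t0 + 4 * j)].

Lemma on_rayP q0 t0 a b :
  reflect (exists j, a = q0 + 6 * j /\ b = t0 + 4 * j) (on_ray q0 t0 a b).
Proof.
apply: (iffP existsP) => [[j /andP[/eqP ha /eqP hb]]|[j [ha hb]]]; first by exists j.
have j_lt : j < a.+1 by lia.
by exists (Ordinal j_lt); rewrite /= ha hb !eqxx.
Qed.

Definition crit_family (e i : nat) (s : bool) (x : mono) : bool :=
  [&& is_crit x, ex x 0 == e, ex x 1 == i & xi x 1 == s].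

(* Each family meets bidegree (a, b) at most once, along a ray.  The side
   conditions exclude x_0 x_1 x_2^j (matched, being a partner of xi_1 x_2^j)
   and xi_1 x_2^j itself. *)
Lemma count_crit_family e i (s : bool) a b : e <= 1 -> i <= 1 ->
  ~~ [&& e == 1, i == 1 & ~~ s] -> ~~ [&& e == 0, i == 0 & s] ->
  count (crit_family e i s) (basis 3 a b) = on_ray (2 * e + 4 * i + 6 * s) (2 * i + 3 * s) a b.
Proof.
move=> e_le i_le not11 not00.
have [[j [ha hb]]|no_ray] := on_rayP.
  pose x := mk e i j false s false.
  have xb : x \in basis 3 a b.
    by rewrite /x mem_basis qdegE tdegE mono3_mk /=; case: s {not11 not00 x} ha hb => /=; lia.
  transitivity (count_mem x (basis 3 a b)); last by rewrite count_uniq_mem ?uniq_basis ?xb.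
  apply: eq_in_count => y.
  rewrite mem_basis => /and3P[y3 /eqP qa /eqP tb].
  case: (mono3P y3) qa tb => [f0 [f1 [f2 [t0 [t1 [t2 ->]]]]]].
  rewrite qdegE tdegE /crit_family /is_crit /is_up /is_down /= /x mk_eq => qa tb.
  by case: s {x xb} not11 not00 ha hb; case: t0 t1 t2 qa tb => [] [] [] /= qa tb; lia.
apply/eqP; rewrite -leqn0 leqNgt -has_count; apply/hasP => -[y].
rewrite mem_basis => /and3P[y3 /eqP qa /eqP tb].
case: (mono3P y3) qa tb => [f0 [f1 [f2 [t0 [t1 [t2 ->]]]]]].
rewrite qdegE tdegE /crit_family /is_crit /is_up /is_down /= => qa tb yf.
apply: no_ray; exists f2.
by case: s not11 not00 yf; case: t0 t1 t2 qa tb => [] [] [] /= qa tb; lia.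
Qed.

Lemma crit_families x : mono3 x ->
  (is_crit x : nat) = crit_family 0 0 false x + crit_family 1 0 false x +
    crit_family 0 1 false x + crit_family 0 1 true x + crit_family 1 1 true x +
    crit_family 1 0 true x.
Proof.
move=> x3; mono3_cases x3; rewrite /crit_family /is_crit /is_up /is_down /=.
by case: s0; case: s1; case: s2 => /=; lia.
Qed.

Lemma num_crit_families a b : num_crit a b =
  count (crit_family 0 0 false) (basis 3 a b) + count (crit_family 1 0 false) (basis 3 a b) +
  count (crit_family 0 1 false) (basis 3 a b) + count (crit_family 0 1 true) (basis 3 a b) +
  count (crit_family 1 1 true) (basis 3 a b) + count (crit_family 1 0 true) (basis 3 a b).
Proof.
rewrite /num_crit; have : all mono3 (basis 3 a b) by apply/allP => x /basis_mono3.
elim: (basis 3 a b) => [|x s IH] //= /andP[x3 s3].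
by rewrite (crit_families x3) (IH s3); lia.
Qed.

Section PowerSeries.
Local Open Scope ring_scope.

Lemma eq_smul (F F' G : bser) a b : (forall i j, F i j = F' i j) ->
  smul F G a b = smul F' G a b.
Proof. by move=> eqF; apply: eq_bigr => i _; apply: eq_bigr => j _; rewrite eqF. Qed.

Lemma smulDl (F F' G : bser) a b :
  smul (sadd F F') G a b = smul F G a b + smul F' G a b.
Proof.
rewrite /smul -big_split /=; apply: eq_bigr => i _.
by rewrite -big_split /=; apply: eq_bigr => j _; rewrite /sadd mulrDl.
Qed.

Lemma sum_ord_if n i (F : nat -> int) :
  \sum_(k < n) (if k == i :> nat then F k else 0) = if (i < n)%N then F i else 0.
Proof.
rewrite -(big_mkord xpredT (fun k => if k == i then F k else 0)).
case: ifP => i_lt.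
  have i_in : i \in index_iota 0 n by rewrite mem_iota /= subn0 add0n i_lt.
  rewrite (bigD1_seq i i_in (iota_uniq _ _)) /= eqxx big1 ?addr0 // => k.
  by case: eqP => // -> /eqP.
rewrite big_seq_cond big1 // => k /andP[]; rewrite mem_iota => k_lt _.
by case: eqP => // ek; move: i_lt k_lt; rewrite ek; lia.
Qed.

Lemma smul_smono c i j (G : bser) a b :
  smul (smono c i j) G a b = if (i <= a)%N && (j <= b)%N then c * G (a - i)%N (b - j)%N else 0.
Proof.
rewrite /smul /smono.
transitivity (\sum_(k < a.+1) if k == i :> nat then
     (if (j < b.+1)%N then c * G (a - i)%N (b - j)%N else 0) else 0).
  apply: eq_bigr => k _; case: (k =P i :> nat) => [ek|nk]; last first.
    by apply: big1 => l _; case: (k =P i :> nat) => // _; rewrite mul0r.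
  rewrite -(sum_ord_if _ _ (fun l => c * G (a - i)%N (b - l)%N)).
  by apply: eq_bigr => l _; rewrite ek; case: (i =P i) => // _ /=; case: (l =P j :> nat) => [->|]; rewrite ?mul0r.
by rewrite (sum_ord_if _ _ (fun=> if (j < b.+1)%N then c * G (a - i)%N (b - j)%N else 0)) !ltnS; case: (i <= a)%N.
Qed.

Lemma sgeom_ray a b : sgeom 6 4 a b = (on_ray 0 0 a b)%:Z.
Proof.
rewrite /sgeom; case: existsP => [[m /andP[/eqP ha /eqP hb]]|no_m].
  by case: on_rayP => // -[]; exists m; split; lia.
case: on_rayP => // -[m [ha hb]]; case: no_m.
have m_lt : (m < (a + b).+1)%N by lia.
by exists (Ordinal m_lt); rewrite /= ha hb !eqxx.
Qed.

Lemma smono_sgeom q0 t0 a b : smul (smono 1 q0 t0) (sgeom 6 4) a b = (on_ray q0 t0 a b)%:Z.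
Proof.
rewrite smul_smono sgeom_ray mul1r; case: ifP => [/andP[q0_le t0_le]|not_le].
  congr (_%:Z); case: on_rayP => [[m [ha hb]]|no1]; case: on_rayP => [[m' [ha' hb']]|no2] //.
    by case: no2; exists m; lia.
  by case: no1; exists m'; lia.
by case: on_rayP => // -[m [ha hb]]; move: not_le; lia.
Qed.

Lemma smono1E p q i j : smono 1 p q i j = (((i == p) && (j == q)) : nat)%:Z.
Proof. by rewrite /smono; case: ifP. Qed.

Definition numer : bser :=
  sadd (sadd (sadd (sadd (sadd (smono 1 0 0) (smono 1 2 0)) (smono 1 4 2))
    (smono 1 10 5)) (smono 1 12 5)) (smono 1 14 7).

Lemma numerE i j : smul (sadd (smono 1 0 0) (smono 1 10 5))
    (sadd (sadd (smono 1 0 0) (smono 1 2 0)) (smono 1 4 2)) i j = numer i j.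
Proof.
have sub_eq (p r k : nat) : (p <= k)%N -> ((k - p)%N == r) = (k == (p + r)%N).
  by move=> p_le; apply/eqP/eqP; lia.
rewrite smulDl !smul_smono /numer /sadd !smono1E !mul1r !subn0 /=.
case: ifP => [le|nle].
  have i_ge : (10 <= i)%N by lia.
  have j_ge : (5 <= j)%N by lia.
  by rewrite !(sub_eq _ _ _ i_ge) !(sub_eq _ _ _ j_ge) /=; ring.
have -> : ((i == 10) && (j == 5)) = false by lia.
have -> : ((i == 12) && (j == 5)) = false by lia.
have -> : ((i == 14) && (j == 7)) = false by lia.
by rewrite /=; ring.
Qed.

Lemma P3_rays a b : P3 a b = (on_ray 0 0 a b + on_ray 2 0 a b + on_ray 4 2 a b +
   on_ray 10 5 a b + on_ray 12 5 a b + on_ray 14 7 a b : nat)%:Z + smono 1 8 3 a b.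
Proof.
rewrite /P3 {1}/sadd (eq_smul _ a b numerE) /numer !smulDl !smono_sgeom.
by rewrite !PoszD.
Qed.

Lemma on_ray_8_3 a b : on_ray 8 3 a b = (on_ray 14 7 a b + ((a == 8) && (b == 3)) : nat)%N :> nat.
Proof.
case: (on_rayP 8 3) => [[m [ha hb]]|no83]; case: (on_rayP 14 7) => [[m' [ha' hb']]|no147] /=.
- lia.
- case: m ha hb => [|m] ha hb; first by rewrite ha hb.
  by case: no147; exists m; lia.
- by case: no83; exists m'.+1; lia.
- case: eqP => [ea|] //; case: eqP => [eb|] //=.
  by case: no83; exists 0%N; lia.
Qed.

End PowerSeries.

Theorem mainTheorem4 : forall a b : nat, ((Khdim 3 a b)%:Z)%R = P3 a b.
Proof.
move=> a b.
rewrite Khdim_crit num_crit_families !count_crit_family //.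
rewrite P3_rays on_ray_8_3 smono1E -!PoszD.
by congr Posz; rewrite !addnA.
Qed.
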